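(* Let $\mathbb{G}$ be an undirected, unweighted random network model that is of finite expected degree (FED). Then $\mathbb{G}$ is uniformly sparse (US).
   Context: A random network model $\mathbb{G}$ assigns to every $n\in\mathbb{N}$ a probability distribution over graphs with $n$ nodes; $G_n$ denotes a graph sampled from it. ''For all sufficiently large $n$'' refers to this index. For a node $u$, $\deg(u)$ is its degree. Let $\boldsymbol{p}_n(d)$ be the probability that $\deg(u)=d$ when $G_n$ is sampled from $\mathbb{G}$ and $u$ is chosen uniformly at random from $G_n$. $\mathbb{G}$ is FED if there is a probability distribution $\boldsymbol{p}$ on $\mathbb{N}$ with finite mean such that (F1) $\lim_{n\to\infty}\boldsymbol{p}_n(d)=\boldsymbol{p}(d)$ for each $d\in\mathbb{N}$, and (F2) $\lim_{n\to\infty}\sum_d d\,\boldsymbol{p}_n(d)=\sum_d d\,\boldsymbol{p}(d)$. A set of nodes $U$ is a node cover of a set of edges $E$ if every edge of $E$ is incident with at least one node of $U$. $\mathbb{G}$ is US if for each $\epsilon>0$ there is a constant $C_\epsilon$ such that for all sufficiently large $n$ the following holds with probability at least $1-\epsilon$: for any set of $y\ge \epsilon n$ edges of $G_n$, every node cover of that set has size at least $y/C_\epsilon$. *)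

From HB Require Import structures.
From mathcomp Require Import all_boot all_order all_algebra.
From mathcomp Require Import all_classical all_reals.
From mathcomp Require Import topology normedtype sequences.
Set Implicit Arguments. Unset Strict Implicit. Unset Printing Implicit Defensive.
Import Order.TTheory GRing.Theory Num.Theory.
Import numFieldNormedType.Exports.
Local Open Scope classical_set_scope.
Local Open Scope ring_scope.

(* A graph on the node set 'I_n is given by its edge set: a set of
   2-element subsets of 'I_n (undirected, unweighted, no loops, no
   multi-edges). *)
Definition edgeset (n : nat) := {set {set 'I_n}}.

Definition simple_graph (n : nat) (G : edgeset n) : bool :=
  [forall e in G, #|e| == 2%N].

Definition deg (n : nat) (G : edgeset n) (u : 'I_n) : nat :=
  #|[set e in G | u \in e]|.

Definition random_network_model (R : realType)
    (P : forall n : nat, {ffun edgeset n -> R}) : Prop :=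
  forall n : nat,
    [/\ forall G, 0 <= P n G,
        \sum_(G : edgeset n) P n G = 1
      & forall G, P n G != 0 -> simple_graph G].

(* p_n(d): probability that a uniformly random node of G_n has degree d. *)
Definition pdeg (R : realType) (P : forall n : nat, {ffun edgeset n -> R})
    (n d : nat) : R :=
  \sum_(G : edgeset n) P n G * (#|[set u : 'I_n | deg G u == d]|%:R / n%:R).

(* expected degree  sum_d d * p_n(d)  (degrees are < n, so the sum is finite) *)
Definition mean_deg (R : realType) (P : forall n : nat, {ffun edgeset n -> R})
    (n : nat) : R :=
  \sum_(d < n.+1) d%:R * pdeg P n d.

Definition FED (R : realType) (P : forall n : nat, {ffun edgeset n -> R}) : Prop :=
  exists (p : nat -> R) (m : R),
    [/\ (forall d, 0 <= p d),
        series p k @[k --> \oo] --> (1 : R),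
        series (fun d => d%:R * p d) k @[k --> \oo] --> m,
        (forall d, pdeg P n d @[n --> \oo] --> p d)
      & mean_deg P n @[n --> \oo] --> m ].

Definition node_cover (n : nat) (U : {set 'I_n}) (F : edgeset n) : bool :=
  [forall e in F, ~~ [disjoint e & U]].

Definition US_event (R : realType) (eps C : R) (n : nat) (G : edgeset n) : bool :=
  [forall F : edgeset n,
     (F \subset G) ==> (eps * n%:R <= #|F|%:R) ==>
     [forall U : {set 'I_n}, node_cover U F ==> (#|F|%:R / C <= #|U|%:R)]].

Definition US (R : realType) (P : forall n : nat, {ffun edgeset n -> R}) : Prop :=
  forall eps : R, 0 < eps ->
    exists C : R, 0 < C /\
      exists N : nat, forall n : nat, (N <= n)%N ->
        1 - eps <= \sum_(G : edgeset n | US_event eps C G) P n G.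

(* Fix a degree threshold K and let T_K(G) be the sum of the degrees of the
   nodes of degree at least K.  A node cover U of F ⊆ G covers at most K edges
   through each node of degree below K, and the remaining edges of F are
   counted in T_K(G), so |F| <= K|U| + T_K(G).  By (F1) and (F2),
   E[T_K(G_n)]/n = sum_{d >= K} d p_n(d) tends to the tail sum_{d >= K} d p(d)
   of the limiting mean, which is below eps^2/2 for K large.  Markov's
   inequality then gives T_K(G_n) <= eps n/2 with probability at least 1 - eps,
   and on that event every F with |F| >= eps n satisfies
   |F| <= K|U| + |F|/2, i.e. |U| >= |F|/(2K). *)

From mathcomp Require Import all_boot all_order all_algebra all_classical all_reals.
From mathcomp Require Import topology normedtype sequences ring lra.
Import Order.TTheory GRing.Theory Num.Theory.
Import numFieldNormedType.Exports.
Set Implicit Arguments. Unset Strict Implicit. Unset Printing Implicit Defensive.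
Local Open Scope ring_scope.

Definition heavy_deg_sum (n K : nat) (G : edgeset n) : nat :=
  \sum_(u : 'I_n | (K <= deg G u)%N) deg G u.

Lemma simple_deg_leq n (G : edgeset n) (u : 'I_n) : simple_graph G -> (deg G u <= n)%N.
Proof.
move=> /forallP simpleG; rewrite -[X in (_ <= X)%N]card_ord.
apply: leq_trans (leq_imset_card (fun v => [set u; v]) 'I_n).
apply/subset_leq_card/fintype.subsetP => e; rewrite inE => /andP[eG ue].
have /cards2P[x [y [_ exy]]] := implyP (simpleG e) eG.
apply/imsetP; move: ue; rewrite exy !inE => /orP[/eqP->|/eqP->].
  by exists y.
by exists x; rewrite // finset.setUC.
Qed.

Lemma deg_subset n (F G : edgeset n) u : F \subset G -> (deg F u <= deg G u)%N.
Proof.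
move=> /fintype.subsetP FG; apply/subset_leq_card/fintype.subsetP => e.
by rewrite !inE => /andP[/FG -> ->].
Qed.

Lemma node_cover_card_le n (U : {set 'I_n}) (F : edgeset n) :
  node_cover U F -> (#|F| <= \sum_(u in U) deg F u)%N.
Proof.
move=> /forallP cover; rewrite -sum1_card.
have -> : (\sum_(u in U) deg F u = \sum_(e in F) #|e :&: U|)%N.
  rewrite /deg; under eq_bigr do rewrite -sum1_card big_mkcond /=.
  rewrite exchange_big [RHS]big_mkcond /=; apply: eq_bigr => e _.
  case: ifP => eF; last by rewrite big1 // => u _; rewrite inE eF.
  rewrite -sum1_card [RHS]big_mkcond [LHS]big_mkcond /=.
  by apply: eq_bigr => u _; rewrite !inE eF /=; case: (u \in U); case: (u \in e).
apply: leq_sum => e eF; rewrite card_gt0 setI_eq0.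
exact: implyP (cover e) eF.
Qed.

Lemma node_cover_card_leq_heavy n (G F : edgeset n) (U : {set 'I_n}) K :
  F \subset G -> node_cover U F -> (#|F| <= K * #|U| + heavy_deg_sum K G)%N.
Proof.
move=> FG /node_cover_card_le /leq_trans; apply.
apply: (@leq_trans (\sum_(u in U) (K + (if K <= deg G u then deg G u else 0)))%N).
  apply: leq_sum => u _; apply: leq_trans (deg_subset u FG) _.
  by case: (leqP K (deg G u)) => [_|/ltnW]; rewrite ?leq_addl ?addn0.
rewrite big_split sum_nat_const mulnC leq_add2l -big_mkcondr /=.
rewrite /heavy_deg_sum [X in (_ <= X)%N](bigID (mem U)) /=.
by apply/(leq_trans _ (leq_addr _ _))/eq_leq/eq_bigl => u; rewrite andbC.
Qed.

Lemma sum_by_fibers (T : finType) (V : nmodType) (f : T -> nat) (g : nat -> V) N :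
  (forall x, f x < N)%N -> \sum_(d < N) g d *+ #|[set x | f x == d]| = \sum_x g (f x).
Proof.
move=> f_lt; rewrite (partition_big (fun x => Ordinal (f_lt x)) xpredT) //=.
apply: eq_bigr => d _; rewrite -sumr_const; apply: eq_big => [x|x].
  by rewrite inE.
by rewrite inE => /eqP <-.
Qed.

(* [pdeg] counts nodes with a classical set comprehension; this is a finset. *)
Lemma pdegE (R : realType) (P : forall n, {ffun edgeset n -> R}) n d :
  pdeg P n d = \sum_(G : edgeset n) P n G * (#|[set u | deg G u == d]|%:R / n%:R).
Proof.
apply: eq_bigr => G _; congr (_ * (_%:R / _)); apply: eq_card => u.
by rewrite inE; apply/idP/idP; rewrite in_setE.
Qed.

Lemma sum_mul_pdeg (R : realType) (P : forall n, {ffun edgeset n -> R}) n (g : nat -> R) :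
  random_network_model P ->
  \sum_(d < n.+1) g d * pdeg P n d =
  \sum_(G : edgeset n) P n G * ((\sum_u g (deg G u)) / n%:R).
Proof.
move=> model; under eq_bigr do rewrite pdegE mulr_sumr.
rewrite exchange_big /=; apply: eq_bigr => G _.
have [->|PG_neq0] := eqVneq (P n G) 0.
  by rewrite mul0r big1 // => d _; rewrite mul0r mulr0.
have simpleG : simple_graph G by case: (model n) => _ _ /(_ G PG_neq0).
rewrite -(@sum_by_fibers _ _ (deg G) g n.+1) => [|u]; last by rewrite ltnS simple_deg_leq.
rewrite mulr_suml mulr_sumr; apply: eq_bigr => d _.
by rewrite -[g d *+ _]mulr_natr mulrCA !mulrA.
Qed.

Lemma mean_deg_tail (R : realType) (P : forall n, {ffun edgeset n -> R}) n K :
  random_network_model P -> (K <= n.+1)%N ->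
  mean_deg P n - \sum_(d < K) d%:R * pdeg P n d =
  \sum_(G : edgeset n) P n G * ((heavy_deg_sum K G)%:R / n%:R).
Proof.
move=> model leKn.
rewrite (big_ord_widen _ (fun d => d%:R * pdeg P n d) leKn) /mean_deg.
rewrite (bigID (fun d : 'I_n.+1 => d < K)%N) /= addrC addrK big_mkcond /=.
transitivity (\sum_(d < n.+1) (if (K <= d)%N then d%:R else 0) * pdeg P n d).
  by apply: eq_bigr => d _; rewrite -leqNgt; case: ifP; rewrite ?mul0r.
rewrite (sum_mul_pdeg n (fun d => if (K <= d)%N then d%:R else 0) model).
apply: eq_bigr => G _.
by rewrite /heavy_deg_sum natr_sum [in RHS]big_mkcond.
Qed.

Local Open Scope classical_set_scope.

Lemma expected_heavy_deg_sum_small (R : realType) (P : forall n, {ffun edgeset n -> R}) :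
  random_network_model P -> FED P -> forall delta : R, 0 < delta ->
  exists K, \forall n \near \oo,
    \sum_(G : edgeset n) P n G * (heavy_deg_sum K G)%:R < delta * n%:R.
Proof.
move=> model [p [m [_ _ mean_p pdeg_cvg mean_deg_cvg]]] delta delta_gt0.
have [K _ /(_ K (leqnn K)) /= tail_small] := cvgr_gt _ mean_p (m - delta / 2) ltac:(lra).
rewrite /series /= big_mkord in tail_small.
have tail_cvg : mean_deg P n - \sum_(d < K) d%:R * pdeg P n d @[n --> \oo] -->
                m - \sum_(d < K) d%:R * p d.
  apply: cvgB => //; apply: cvg_big => [|d _]; first exact: add_continuous.
  exact: cvgMr (pdeg_cvg d).
exists K; near=> n.
have n_gt0 : (0 < n)%N by near: n; exact: nbhs_infty_gt.
have tail_lt : mean_deg P n - \sum_(d < K) d%:R * pdeg P n d < delta.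
  by near: n; apply: (cvgr_lt _ tail_cvg); lra.
rewrite -ltr_pdivrMr ?ltr0n // mulr_suml.
under eq_bigr do rewrite -mulrA.
by rewrite -mean_deg_tail //; apply: leqW; near: n; exact: nbhs_infty_ge.
Unshelve. all: by end_near.
Qed.

Lemma markov_finsum (R : realFieldType) (T : finType) (w X : T -> R) (a : R) :
  (forall i, 0 <= w i) -> (forall i, 0 <= X i) ->
  a * \sum_(i | a < X i) w i <= \sum_i w i * X i.
Proof.
move=> w_ge0 X_ge0; rewrite mulr_sumr [leRHS](bigID (fun i => a < X i)) /=.
rewrite -[leLHS]addr0; apply: lerD.
  by apply: ler_sum => i /ltW aX; rewrite mulrC ler_wpM2l.
by apply: sumr_ge0 => i _; apply: mulr_ge0.
Qed.

Lemma US_event_of_heavy_deg_sum (R : realType) (eps C : R) n (G : edgeset n) K :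
  0 < C -> 2 * K%:R <= C -> (heavy_deg_sum K G)%:R <= eps * n%:R / 2 ->
  US_event eps C G.
Proof.
move=> C_gt0 KC heavy_le; apply/forallP => F; apply/implyP => FG; apply/implyP => F_large.
apply/forallP => U; apply/implyP => cover.
have : #|F|%:R <= K%:R * #|U|%:R + (heavy_deg_sum K G)%:R :> R.
  by rewrite -natrM -natrD ler_nat node_cover_card_leq_heavy.
have U_ge0 : 0 <= #|U|%:R :> R by [].
rewrite ler_pdivrMr //; nra.
Qed.

Lemma US_event_prob_ge (R : realType) (P : forall n, {ffun edgeset n -> R}) (eps C : R) n K :
  random_network_model P -> 0 < eps -> 0 < C -> 2 * K%:R <= C ->
  \sum_(G : edgeset n) P n G * (heavy_deg_sum K G)%:R < eps ^+ 2 / 2 * n%:R ->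
  1 - eps <= \sum_(G | US_event eps C G) P n G.
Proof.
move=> model eps_gt0 C_gt0 KC heavy_small; have [P_ge0 P_sum1 _] := model n.
pose a := eps * n%:R / 2; pose heavy (G : edgeset n) : R := (heavy_deg_sum K G)%:R.
have a_gt0 : 0 < a.
  have expected_heavy_ge0 : 0 <= \sum_(G : edgeset n) P n G * heavy G.
    by apply: sumr_ge0 => G _; apply: mulr_ge0.
  rewrite /a; nra.
have bad_lt : \sum_(G | a < heavy G) P n G < eps.
  rewrite -(ltr_pM2l a_gt0); apply: le_lt_trans (markov_finsum _ P_ge0 _) _ => [G|].
    exact: ler0n.
  by have -> : a * eps = eps ^+ 2 / 2 * n%:R by rewrite /a; ring.
have good_le : \sum_(G | ~~ (a < heavy G)) P n G <= \sum_(G | US_event eps C G) P n G.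
  rewrite [leLHS]big_mkcond [leRHS]big_mkcond; apply: ler_sum => G _.
  case: ifP => [|_]; last by case: ifP.
  by rewrite -leNgt => heavy_le; rewrite (US_event_of_heavy_deg_sum C_gt0 KC heavy_le).
by move: P_sum1; rewrite (bigID (fun G => a < heavy G)) /=; lra.
Qed.

Theorem lemma1 (R : realType) (P : forall n : nat, {ffun edgeset n -> R}) :
  random_network_model P -> FED P -> US P.
Proof.
move=> model fed eps eps_gt0.
have eps2_gt0 : 0 < eps ^+ 2 / 2 by rewrite divr_gt0 ?exprn_gt0.
have [K [N _ heavy_small]] := expected_heavy_deg_sum_small model fed eps2_gt0.
have K_ge0 : 0 <= K%:R :> R by [].
exists (2 * K%:R + 1); split; first lra.
exists N => n /heavy_small; apply: US_event_prob_ge => //; lra.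
Qed.
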